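(* Let $\mathcal{D}_{\text{SEQ}}$ be a temporal sequence database and let $(E_i,E_j)$ be the pair of events occurring in a 2-event temporal pattern $P$. Then $\textit{conf}(P) \le \textit{conf}(E_i,E_j)$.
   Context: A temporal event is $E=(\omega,T)$ with $\omega$ a symbol and $T$ a set of time intervals; an instance is $e=(\omega,[t_s,t_e])$ with $[t_s,t_e]\in T$. A temporal sequence is a list of event instances ordered by start time; $\mathcal{D}_{\text{SEQ}}$ is a finite collection of temporal sequences. A temporal pattern is a list of triples $(r_{ij},E_i,E_j)$ with $r_{ij}\in\{\text{Follows},\text{Contains},\text{Overlaps}\}$ (fixed binary conditions on instance intervals). A sequence $S$ supports $P$ iff $|S|\ge2$ and for every triple $(r_{ij},E_i,E_j)\in P$ there are instances of $E_i,E_j$ in $S$ between which $r_{ij}$ holds. $\textit{supp}(E)$ (resp. $\textit{supp}(E_i,E_j)$) is the number of sequences containing at least one instance of $E$ (resp. of both $E_i$ and $E_j$); $\textit{supp}(P)$ is the number of sequences supporting $P$. Confidences: $\textit{conf}(E_i,E_j)=\textit{supp}(E_i,E_j)/\max\{\textit{supp}(E_i),\textit{supp}(E_j)\}$ and $\textit{conf}(P)=\textit{supp}(P)/\max_{E_k\in P}\textit{supp}(E_k)$. *)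

From HB Require Import structures.
From mathcomp Require Import all_boot all_order all_algebra.
Set Implicit Arguments. Unset Strict Implicit. Unset Printing Implicit Defensive.
Import Order.TTheory GRing.Theory Num.Theory.

(* Temporal events are identified by their symbol omega; the interval set T of
   an event is the set of intervals at which the symbol occurs.  Time stamps are
   rationals. *)

Notation instance Sym := (Sym * rat * rat)%type.
Definition label (Sym : eqType) (e : instance Sym) : Sym := e.1.1.
Definition ts (Sym : eqType) (e : instance Sym) : rat := e.1.2.
Definition te (Sym : eqType) (e : instance Sym) : rat := e.2.

Notation tseq Sym := (seq (instance Sym)).

Definition wf_tseq (Sym : eqType) (S : tseq Sym) : Prop :=
  (forall e, e \in S -> (ts e <= te e)%R) /\
  sorted (fun a b : instance Sym => (ts a <= ts b)%R) S.

Inductive trel := Follows | Contains | Overlaps.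

Definition holds (Sym : eqType) (r : trel) (a b : instance Sym) : bool :=
  match r with
  | Follows => (te a <= ts b)%R
  | Contains => (ts a <= ts b)%R && (te b <= te a)%R
  | Overlaps => [&& (ts a < ts b)%R, (ts b < te a)%R & (te a < te b)%R]
  end.

Definition occurs (Sym : eqType) (E : Sym) (S : tseq Sym) : bool :=
  has (fun e => label e == E) S.

Definition supp1 (Sym : eqType) (D : seq (tseq Sym)) (E : Sym) : nat :=
  count (occurs E) D.

Definition supp2 (Sym : eqType) (D : seq (tseq Sym)) (Ei Ej : Sym) : nat :=
  count (fun S => occurs Ei S && occurs Ej S) D.

Notation pattern Sym := (seq (trel * Sym * Sym)).

Definition supports (Sym : eqType) (S : tseq Sym) (P : pattern Sym) : bool :=
  (2 <= size S) &&
  all (fun t : trel * Sym * Sym =>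
         let: (r, Ei, Ej) := t in
         has (fun a => (label a == Ei) &&
               has (fun b => (label b == Ej) && holds r a b) S) S) P.

Definition suppP (Sym : eqType) (D : seq (tseq Sym)) (P : pattern Sym) : nat :=
  count (fun S => supports S P) D.

Definition pevents (Sym : eqType) (P : pattern Sym) : seq Sym :=
  undup (flatten [seq [:: t.1.2; t.2] | t <- P]).

Definition conf2 (Sym : eqType) (D : seq (tseq Sym)) (Ei Ej : Sym) : rat :=
  ((supp2 D Ei Ej)%:R / (maxn (supp1 D Ei) (supp1 D Ej))%:R)%R.

Definition confP (Sym : eqType) (D : seq (tseq Sym)) (P : pattern Sym) : rat :=
  ((suppP D P)%:R / (\max_(E <- pevents P) supp1 D E)%:R)%R.

From mathcomp Require Import all_boot all_order all_algebra.
Import Order.TTheory GRing.Theory Num.Theory.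

(* A sequence supporting a pattern contains instances of both events of each of
   its triples, so supp(P) <= supp(Ei, Ej); and the events of a one-triple
   pattern are exactly Ei and Ej, so both confidences share the denominator. *)

Section Support.

Variable Sym : eqType.

Lemma supports_cons_occurs (S : tseq Sym) (P : pattern Sym) (r : trel) (Ei Ej : Sym) :
  supports S ((r, Ei, Ej) :: P) -> occurs Ei S && occurs Ej S.
Proof.
case/andP=> _ /= /andP [/hasP [a aS /andP [/eqP la]]] /hasP [b bS].
case/andP=> /eqP lb _ _.
by apply/andP; split; apply/hasP; [exists a | exists b] => //; apply/eqP.
Qed.

Lemma suppP_cons_le_supp2 (D : seq (tseq Sym)) (P : pattern Sym) (r : trel) (Ei Ej : Sym) :
  suppP D ((r, Ei, Ej) :: P) <= supp2 D Ei Ej.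
Proof. by apply: sub_count => S; apply: supports_cons_occurs. Qed.

Lemma big_max_pevents1 (f : Sym -> nat) (r : trel) (Ei Ej : Sym) :
  \max_(E <- pevents [:: (r, Ei, Ej)]) f E = maxn (f Ei) (f Ej).
Proof.
rewrite /pevents /= in_cons in_nil orbF.
have [<- | _] := eqVneq Ei Ej; first by rewrite big_seq1 maxnn.
by rewrite big_cons big_seq1.
Qed.

End Support.

Theorem lemma3 (Sym : eqType) (D : seq (tseq Sym))
  (wfD : forall S, S \in D -> wf_tseq S)
  (r : trel) (Ei Ej : Sym) :
  (confP D [:: (r, Ei, Ej)] <= conf2 D Ei Ej)%R.
Proof.
rewrite /confP /conf2 big_max_pevents1.
apply: ler_wpM2r; first by rewrite invr_ge0 ler0n.
by rewrite ler_nat suppP_cons_le_supp2.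
Qed.
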